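(* Let $n\ge1$ and $1\le k\le n$. For every $g\in\mathrm{Sp}(2n,\mathbb R)$ one has $p_k(g^{-1})=(-1)^k p_k(g)$.
   Context: $J:\mathbb R^{2n}\to\mathbb R^{2n}$ is the linear map with $Je_i=(-1)^ie_{2n-i+1}$ on the standard basis $e_1,\dots,e_{2n}$, and $\mathrm{Sp}(2n,\mathbb R)=\{g\in\mathrm{GL}(2n,\mathbb R):g^TJg=J\}$. The antiprincipal $k\times k$ minor $p_k(g)$ of a $2n\times 2n$ matrix $g$ is defined by $ge_{2n}\wedge ge_{2n-1}\wedge\cdots\wedge ge_{2n-k+1}\wedge e_{k+1}\wedge\cdots\wedge e_{2n}=p_k(g)\,e_1\wedge\cdots\wedge e_{2n}$; equivalently $p_k(g)=\det\big(g[\{1,\dots,k\},\{2n,2n-1,\dots,2n-k+1\}]\big)$, the determinant of the submatrix with rows $1,\dots,k$ and columns $2n,\dots,2n-k+1$ in that order. *)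

From mathcomp Require Import all_boot all_order all_algebra.
From mathcomp Require Import all_classical all_reals.
Set Implicit Arguments. Unset Strict Implicit. Unset Printing Implicit Defensive.
Import GRing.Theory Num.Theory.
Local Open Scope ring_scope.

(* Indices are 0-based: paper index i (1..2n) corresponds to ordinal i-1. *)

(* J with J e_i = (-1)^i e_{2n-i+1} (1-based), i.e. column j (0-based)
   has the entry (-1)^(j+1) in row 2n-1-j (0-based). *)
Definition Jmx (R : ringType) (n : nat) : 'M[R]_(n.*2) :=
  \matrix_(i < n.*2, j < n.*2)
     (if (i : nat) == (n.*2 - 1 - j)%N then (-1) ^+ (j.+1) else 0).

Definition symplectic (R : comUnitRingType) (n : nat) (g : 'M[R]_(n.*2)) : Prop :=
  g \in unitmx /\ g^T *m Jmx R n *m g = Jmx R n.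

(* Antiprincipal k x k minor: det of the submatrix with rows 1..k and
   columns 2n, 2n-1, ..., 2n-k+1 (in that order); 0-based entry (r,c) is
   g r (2n-1-c).  Requires k <= 2n. *)
Definition antiminor (R : comRingType) (m k : nat) (hk : (k <= m)%N)
    (g : 'M[R]_m) : R :=
  \det (\matrix_(r < k, c < k)
          g (widen_ord hk r) (rev_ord (widen_ord hk c))).

From mathcomp Require Import all_boot all_order all_algebra.
From mathcomp Require Import all_classical all_reals.
From mathcomp Require Import zify.
Import GRing.Theory Num.Theory.
Local Open Scope ring_scope.

(* Write J for Jmx: it is the antidiagonal matrix with (J N)_(a,b) =
   (-1)^a N_(2n-1-a, b) and (N J)_(a,b) = (-1)^(b+1) N_(a, 2n-1-b)
   (0-based indices).  Hence J^2 = -1, and g^T J g = J gives the explicit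
   inverse g^-1 = -J g^T J.  Computing entries, the k x k antiprincipal
   submatrix of -J M^T J is -D A^T D, where A is the antiprincipal submatrix
   of M and D = diag((-1)^i).  Since det D^2 = 1 and det A^T = det A, its
   determinant is (-1)^k det A. *)

Section SignsOfJ.
Variables (R : nzRingType) (n : nat).

(* Reversing an index of 'I_(2n) flips its parity, so the two sign
   conventions in the entries of J N and N J agree. *)
Lemma sign_rev_ord (x : 'I_(n.*2)) : (-1) ^+ (rev_ord x).+1 = (-1) ^+ x :> R.
Proof.
rewrite -signr_odd -[RHS]signr_odd; congr (_ ^+ _).
have -> : (rev_ord x).+1 = (n.*2 - x)%N by have := ltn_ord x; rewrite /=; lia.
by rewrite oddB ?odd_double //= ltnW.
Qed.

Lemma mulmxJ p (N : 'M[R]_(p, n.*2)) a b :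
  (N *m Jmx R n) a b = (-1) ^+ b.+1 * N a (rev_ord b).
Proof.
rewrite !mxE (bigD1 (rev_ord b)) //= big1 ?addr0.
  rewrite mxE /=; have hb := ltn_ord b.
  have -> : (n.*2 - b.+1)%N == (n.*2 - 1 - b)%N by apply/eqP; lia.
  by rewrite commr_sign.
move=> i /eqP ne_i; rewrite mxE; case: eqP => [e|]; last by rewrite mulr0.
by exfalso; apply: ne_i; apply/val_inj => /=; have := ltn_ord i; lia.
Qed.

Lemma mulJmx p (N : 'M[R]_(n.*2, p)) a b :
  (Jmx R n *m N) a b = (-1) ^+ a * N (rev_ord a) b.
Proof.
rewrite !mxE (bigD1 (rev_ord a)) //= big1 ?addr0.
  rewrite mxE /=; have ha := ltn_ord a.
  have -> : (a : nat) == (n.*2 - 1 - (n.*2 - a.+1))%N by apply/eqP; lia.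
  by rewrite (sign_rev_ord a).
move=> i /eqP ne_i; rewrite mxE; case: eqP => [e|]; last by rewrite mul0r.
by exfalso; apply: ne_i; apply/val_inj => /=; have := ltn_ord i; lia.
Qed.

Lemma Jmx_sqr : Jmx R n *m Jmx R n = - 1%:M.
Proof.
apply/matrixP => a b; rewrite mulJmx !mxE /=.
have ha := ltn_ord a; have hb := ltn_ord b.
have [<-|ne_ab] := eqVneq a b.
  case: eqP => [_|]; last by lia.
  by rewrite -exprD addnS addnn exprS -signr_odd odd_double mulr1.
rewrite mulr0n; case: eqP => [e|]; last by rewrite mulr0 oppr0.
by exfalso; move/eqP: ne_ab; apply; apply/val_inj => /=; lia.
Qed.

End SignsOfJ.

Lemma invmx_symplectic (R : comUnitRingType) n (g : 'M[R]_(n.*2)) :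
  symplectic g -> invmx g = - (Jmx R n *m g^T *m Jmx R n).
Proof.
move=> [g_unit gJg].
have inv_l : - (Jmx R n *m g^T *m Jmx R n) *m g = 1%:M.
  by rewrite mulNmx -!mulmxA (mulmxA g^T) gJg Jmx_sqr opprK.
by rewrite -[LHS]mul1mx -inv_l -(mulmxA _ g) mulmxV // mulmx1.
Qed.

(* Conjugating the transpose by the sign matrix diag((-1)^i) preserves the
   determinant, because that sign matrix squares to the identity. *)
Lemma det_sign_conj_tr (R : comRingType) k (A : 'M[R]_k) :
  let D := diag_mx (\row_(i < k) ((-1) ^+ i : R)) in
  \det (D *m A^T *m D) = \det A.
Proof.
rewrite /= !det_mulmx det_tr det_diag mulrAC -big_split /=.
by rewrite big1 ?mul1r // => i _; rewrite mxE -expr2 sqrr_sign.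
Qed.

Lemma antiminor_JtrJ (R : comRingType) n k (hk : (k <= n.*2)%N)
    (M : 'M[R]_(n.*2)) :
  antiminor hk (- (Jmx R n *m M^T *m Jmx R n)) = (-1) ^+ k * antiminor hk M.
Proof.
rewrite /antiminor.
set A := \matrix_(r < k, c < k) M (widen_ord hk r) (rev_ord (widen_ord hk c)).
set D := diag_mx (\row_(i < k) ((-1) ^+ i : R)).
have -> : \matrix_(r < k, c < k)
    (- (Jmx R n *m M^T *m Jmx R n)) (widen_ord hk r) (rev_ord (widen_ord hk c))
    = (-1) *: (D *m A^T *m D).
  apply/matrixP => r c.
  rewrite mul_mx_diag mxE mul_diag_mx mxE -mulmxA mulJmx mulmxJ rev_ordK.
  by rewrite sign_rev_ord !mxE /= mulN1r mulrA [in RHS]mulrAC.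
by rewrite detZ det_sign_conj_tr.
Qed.

Theorem mainTheorem9 (R : realType) (n k : nat) (hn : (1 <= n)%N)
    (hk1 : (1 <= k)%N) (hkn : (k <= n)%N) (hk : (k <= n.*2)%N)
    (g : 'M[R]_(n.*2)) :
  symplectic g ->
  antiminor hk (invmx g) = (-1) ^+ k * antiminor hk g.
Proof. by move=> g_symp; rewrite invmx_symplectic // antiminor_JtrJ. Qed.
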